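(* In the hierarchical partition construction described in the context, let $A$ be any set occurring in some partition $\mathcal S_j$, and let $a_1$ be the largest level $j$ with $A\in\mathcal S_j$. Then the number of sets $B\neq A$ for which there exists a level $j$ with $A,B\in\mathcal S_j$ and $A$ knows $B$ at level $j$, and such that $A$ is responsible for the pair (i.e. $a_1\le b_1$, where $b_1$ is the largest level with $B\in\mathcal S_{b_1}$), is at most $\lambda^{3+\eta}$.
   Context: Let $(V,d)$ be a finite metric space with $|V|\ge 2$ which is doubling with constant $\lambda$: for every $v\in V$ and $r>0$ the open ball $B_{2r}(v)=\{u:d(u,v)<2r\}$ is contained in the union of at most $\lambda$ open balls $B_r(w)$, $w\in V$. Fix an integer $\eta\ge2$ and a real $\tau$ with $1+\frac{1}{2^{\eta-1}-1}\le\tau\le 2^{\eta}$. For $L\subseteq V$ and $r>0$, a greedy partition of $L$ with parameter $r$ is obtained by: set $L_0=L$; while $L_i\ne\emptyset$ choose any $v_i\in L_i$, let $P_i=\{u\in L_i: d(u,v_i)<2^{-\eta-1}r\}$ with leader $v_i$, and set $L_{i+1}=L_i\setminus P_i$. Hierarchical partition construction: choose $r_0$ with $0<r_0<\min_{u\ne v}d(u,v)$ and put $r_j=\tau^j r_0$. Let $\mathcal S_0=\{\{v\}:v\in V\}$, the leader of $\{v\}$ being $v$. While $\mathcal S_j$ has more than one element: let $L_j$ be the set of leaders of the sets in $\mathcal S_j$, let $\mathcal S'_{j+1}$ be a greedy partition of $L_j$ with parameter $2r_{j+1}$, and let $\mathcal S_{j+1}$ consist, for each $P\in\mathcal S'_{j+1}$,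 of the set $\bigcup\{S\in\mathcal S_j:\mathrm{leader}(S)\in P\}$, whose leader is defined to be the leader of $P$. Each $\mathcal S_j$ is a partition of $V$ and $\mathcal S_j$ refines $\mathcal S_{j+1}$, so a set occurs in a contiguous range of levels. For $S,S'\in\mathcal S_j$, $S$ knows $S'$ (at level $j$) if there are $v\in S$, $u\in S'$ with $d(v,u)<r_j$. *)

From HB Require Import structures.
From mathcomp Require Import all_boot all_order all_algebra.
Set Implicit Arguments. Unset Strict Implicit. Unset Printing Implicit Defensive.
Import Order.TTheory GRing.Theory Num.Theory.
Local Open Scope ring_scope.

Section Defs.
Variables (R : realFieldType) (V : finType) (d : V -> V -> R).

Definition is_metric : Prop :=
  [/\ forall u v, 0 <= d u v,
      forall u v, (d u v == 0) = (u == v),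
      forall u v, d u v = d v u &
      forall u v w, d u w <= d u v + d v w].

Definition doubling (lam : nat) : Prop :=
  forall (v : V) (r : R), 0 < r ->
    exists W : {set V}, (#|W| <= lam)%N /\
      forall u, d u v < 2 * r -> exists2 w, w \in W & d u w < r.

(* One run of the greedy partition with threshold c (= 2^{-eta-1} r) driven by
   the sequence of chosen leaders vs.  Returns the list of (part, leader)
   pairs, or None if vs is not a legal sequence of choices. *)
Fixpoint greedy_run (L : {set V}) (c : R) (vs : seq V)
  : option (seq ({set V} * V)) :=
  match vs with
  | [::] => if L == set0 then Some [::] else None
  | v :: vs' =>
      if v \in L then
        let P := [set u in L | d u v < c] in
        omap (cons (P, v)) (greedy_run (L :\: P) c vs')
      else None
  end.

Definition rad (tau r0 : R) (j : nat) : R := tau ^+ j * r0.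

Definition leaders (S : nat -> {set {set V}}) (ldr : nat -> {set V} -> V)
  (j : nat) : {set V} := [set ldr j X | X in S j].

(* The hierarchical partition construction, levels 0..m.
   S j is the partition S_j, ldr j X the leader of X in S_j. *)
Definition hier_partition (eta : nat) (tau r0 : R) (m : nat)
  (S : nat -> {set {set V}}) (ldr : nat -> {set V} -> V) : Prop :=
  [/\ S 0%N = [set [set v] | v : V],
      (forall v : V, ldr 0%N [set v] = v),
      (forall j, (j < m)%N ->
         (1 < #|S j|)%N /\
         exists vs ps,
           greedy_run (leaders S ldr j)
             ((2 ^+ eta.+1)^-1 * (2 * rad tau r0 j.+1)) vs = Some ps /\
           S j.+1 = [set:: [seq \bigcup_(X in S j | ldr j X \in p.1) X | p : {set V} * V <- ps]] /\
           (forall p : {set V} * V, p \in ps ->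
              ldr j.+1 (\bigcup_(X in S j | ldr j X \in p.1) X) = p.2)) &
      (#|S m| <= 1)%N].

Definition knows (tau r0 : R) (j : nat) (A B : {set V}) : bool :=
  [exists v in A, exists u in B, d v u < rad tau r0 j].

Definition top_level (m : nat) (S : nat -> {set {set V}}) (A : {set V}) : nat :=
  (\max_(j < m.+1 | A \in S j) j)%N.

End Defs.

From Pilot Require Import Defs.
From HB Require Import structures.
From mathcomp Require Import all_boot all_order all_algebra.
From mathcomp Require Import lra.
Import Order.TTheory GRing.Theory Num.Theory.
Local Open Scope ring_scope.
Set Implicit Arguments. Unset Strict Implicit. Unset Printing Implicit Defensive.

(* At every level j the sets of S_j form a partition of V in which each point
   lies within r_j / 2 of the leader of its set and distinct leaders are at
   least 2^-eta r_j apart; the lower bound on tau is exactly what keeps the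
   radius bound through a greedy merge.  Since S_j refines S_(j+1), a set occurs
   in a contiguous range of levels.  Hence if A knows B at some level j and
   a := top(A) <= top(B), then B still belongs to S_a and its leader lies within
   2 r_a of the leader of A.  These leaders are 2^-eta r_a-separated points of a
   ball of radius 2^(eta+2) * (2^-(eta+1) r_a), so iterating the doubling
   property eta+2 times bounds their number by lambda^(eta+2). *)


Lemma leq_card_bigcup (T I : finType) (A : {set I}) (F : I -> {set T}) :
  (#|\bigcup_(i in A) F i| <= \sum_(i in A) #|F i|)%N.
Proof.
apply: (big_ind2 (fun (X : {set T}) n => #|X| <= n)%N) => [|X1 n1 X2 n2 h1 h2|//].
  by rewrite cards0.
exact: leq_trans (leq_card_setU X1 X2).1 (leq_add h1 h2).
Qed.

Lemma invpow2S_mul2 (R : numFieldType) (eta : nat) (x : R) :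
  (2 ^+ eta.+1)^-1 * (2 * x) = (2 ^+ eta)^-1 * x.
Proof. by rewrite exprSr invfM -mulrA mulKf ?pnatr_eq0. Qed.

Section TauBound.
Variables (R : realFieldType) (eta : nat) (tau : R).
Hypotheses (heta : (2 <= eta)%N) (htau : 1 + (2 ^+ eta.-1 - 1)^-1 <= tau).

Let K : R := 2 ^+ eta.-1.

Let K_ge2 : 2 <= K.
Proof.
rewrite /K; case: eta heta => [|[|e]] // _.
by rewrite exprS ler_peMr ?exprn_ege1 ?ler1n.
Qed.

Lemma tau_ge1 : 1 <= tau.
Proof.
apply: le_trans htau; rewrite lerDl invr_ge0 subr_ge0.
by apply: le_trans K_ge2; rewrite ler1n.
Qed.

Lemma tau_gt0 : 0 < tau.
Proof. exact: lt_le_trans tau_ge1. Qed.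

Lemma tau_merge_bound : 1 + 2 * (2 ^+ eta)^-1 * tau <= tau.
Proof.
have K0 : 0 < K by apply: lt_le_trans K_ge2.
have K1 : 0 < K - 1 by rewrite subr_gt0; apply: lt_le_trans K_ge2; rewrite ltr1n.
have -> : 2 * (2 ^+ eta)^-1 = K^-1 :> R.
  rewrite /K -[in 2 ^+ eta](prednK (ltnW heta)) exprS invfM mulrA.
  by rewrite divff ?mul1r ?pnatr_eq0.
have hK : K <= tau * (K - 1).
  by move: htau; rewrite -(ler_pM2r K1) mulrDl mul1r mulVf ?gt_eqF // subrK.
rewrite -(ler_pM2l K0) mulrDr mulr1 mulrA mulfV ?gt_eqF // mul1r.
by move: hK; rewrite mulrBr mulr1 lerBrDr mulrC.
Qed.

End TauBound.

Section Metric.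
Variables (R : realFieldType) (V : finType) (d : V -> V -> R).
Hypothesis hm : is_metric d.

Let d_sym u v : d u v = d v u. Proof. by case: hm. Qed.
Let d_triangle u v w : d u w <= d u v + d v w. Proof. by case: hm. Qed.
Let d_self v : d v v = 0. Proof. by case: hm => _ dE _ _; apply/eqP; rewrite dE. Qed.

Lemma doubling_iter lam : doubling d lam -> forall k (v : V) (s : R), 0 < s ->
  exists W : {set V}, (#|W| <= lam ^ k)%N /\
    forall u, d u v < 2 ^+ k * s -> exists2 w, w \in W & d u w < s.
Proof.
move=> hd; elim=> [|k IH] v s s0.
  exists [set v]; split=> [|u]; first by rewrite cards1.
  by rewrite mul1r => duv; exists v; rewrite ?inE.
have [W1 [cardW1 coverW1]] := IH v _ (mulr_gt0 (ltr0n _ 2) s0).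
pose covers w (W : {set V}) :=
  (#|W| <= lam)%N && [forall u, (d u w < 2 * s) ==> [exists x in W, d u x < s]].
pose f w := odflt set0 [pick W | covers w W].
have coversf w : covers w (f w).
  rewrite /f; case: pickP => //= no_cover; have [W [cardW coverW]] := hd w s s0.
  case/negP: (negbT (no_cover W)); rewrite /covers cardW.
  apply/forallP=> u; apply/implyP=> /coverW [x xW dux].
  by apply/existsP; exists x; rewrite xW.
exists (\bigcup_(w in W1) f w); split.
  apply: leq_trans (leq_card_bigcup W1 f) _.
  apply: (@leq_trans (\sum_(w in W1) lam)%N).
    by apply: leq_sum => w _; case/andP: (coversf w).
  by rewrite sum_nat_const expnSr leq_mul2r cardW1 orbT.
move=> u; rewrite exprSr -mulrA => /coverW1 [w wW1 duw].
have /andP[_ /forallP /(_ u)] := coversf w; rewrite duw => /existsP [x /andP[xf dux]].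
by exists x => //; apply/bigcupP; exists w.
Qed.

Lemma packing_card lam : doubling d lam ->
  forall k (v : V) (s : R) (P : {set V}), 0 < s ->
  {in P, forall p, d p v < 2 ^+ k * s} ->
  {in P &, forall p q, p != q -> 2 * s <= d p q} ->
  (#|P| <= lam ^ k)%N.
Proof.
move=> hd k v s P s0 nearP sepP.
have [W [cardW coverW]] := doubling_iter hd k v s0.
pose g p := odflt p [pick w in W | d p w < s].
have gP p : p \in P -> g p \in W /\ d p (g p) < s.
  move=> pP; rewrite /g; case: pickP => /= [w /andP[-> ->]//|none].
  have [w wW dpw] := coverW p (nearP p pP).
  by have := none w; rewrite wW dpw.
rewrite -(card_in_imset (f := g)); last first.
  move=> p q pP qP gpq; apply/eqP; apply: contraT => pq.
  have [_ dp] := gP p pP; have [_ dq] := gP q qP.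
  have : d p q < 2 * s.
    apply: le_lt_trans (d_triangle p (g p) q) _.
    by rewrite mulr_natl mulr2n ltrD // d_sym gpq.
  by rewrite ltNge sepP.
apply: leq_trans cardW; apply/subset_leq_card/subsetP => w /imsetP [p pP ->].
by have [] := gP p pP.
Qed.

Local Notation part := ({set V} * V)%type.

Record greedy_partition (L : {set V}) (c : R) (ps : seq part) : Prop :=
  GreedyPartition {
    greedy_leader_mem : {in ps, forall p : part, p.2 \in p.1};
    greedy_part_sub : {in ps, forall p : part, p.1 \subset L};
    greedy_part_near : {in ps, forall p : part, {in p.1, forall u, d u p.2 < c}};
    greedy_cover : {in L, forall u, exists2 p, p \in ps & u \in p.1};
    greedy_disjoint : {in ps &, forall (p q : part) u, u \in p.1 -> u \in q.1 -> p = q};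
    greedy_leader_sep : {in ps &, forall p q : part, p != q -> c <= d p.2 q.2} }.

Lemma greedy_run_partition {c : R} {vs L ps} : 0 < c ->
  greedy_run d L c vs = Some ps -> greedy_partition L c ps.
Proof.
move=> c0; elim: vs L ps => [|v vs IH] L ps /=.
  case: eqP => // -> [<-].
  by split=> // u; rewrite inE.
case vL: (v \in L) => //.
set P := [set u in L | d u v < c].
case run: (greedy_run d (L :\: P) c vs) => [ps'|] //= [<-].
have [lead sub near cover disj sep] := IH _ _ run.
have Pv : v \in P by rewrite inE vL d_self.
have rest q u : q \in ps' -> u \in q.1 -> u \in L /\ u \notin P.
  by move=> qps uq; move: (subsetP (sub q qps) u uq); rewrite inE andbC => /andP[].
have far q : q \in ps' -> c <= d q.2 v.
  move=> qps; have [qL qP] := rest q _ qps (lead q qps).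
  by move: qP; rewrite inE qL -leNgt.
split.
- by move=> p /predU1P [->|/lead].
- move=> p /predU1P [->|pps]; first by apply/subsetP=> u; rewrite inE => /andP[].
  by apply/subsetP=> u /(rest p u pps) [].
- move=> p /predU1P [-> u|]; last exact: near.
  by rewrite inE => /andP[].
- move=> u uL; have [uP|uP] := boolP (u \in P).
    by exists (P, v); first exact: mem_head.
  have [q qps uq] : exists2 q, q \in ps' & u \in q.1 by apply: cover; rewrite inE uP.
  by exists q; rewrite // inE qps orbT.
- move=> p q /predU1P [->|pps] /predU1P [->|qps] u //=.
  + by move=> uP /(rest q u qps) [_ /negP].
  + by move=> /(rest p u pps) [_ /negP].
  + exact: disj.
- move=> p q /predU1P [->|pps] /predU1P [->|qps] //=; first by rewrite eqxx.
  + by rewrite d_sym far.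
  + by rewrite far.
  + exact: sep.
Qed.

End Metric.

Lemma top_levelP (V : finType) (m : nat) (S : nat -> {set {set V}}) (A : {set V}) j0 :
  (j0 <= m)%N -> A \in S j0 ->
  [/\ (top_level m S A <= m)%N, A \in S (top_level m S A) &
      forall j, (j <= m)%N -> A \in S j -> (j <= top_level m S A)%N].
Proof.
move=> le_j0m Aj0; have lt_j0m : (j0 < m.+1)%N by [].
have top_max j : (j <= m)%N -> A \in S j -> (j <= top_level m S A)%N.
  by move=> le_jm Aj; exact: (leq_bigmax_cond (Ordinal (le_jm : (j < m.+1)%N)) Aj).
have [i Ai top_i] : exists2 i : 'I_m.+1, A \in S i & top_level m S A = i.
  rewrite /top_level (bigop.bigmax_eq_arg (Ordinal lt_j0m)) //.
  by case: arg_maxnP => //= i Ai _; exists i.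
by split=> //; rewrite top_i // -ltnS.
Qed.

Section Hierarchy.
Variables (R : realFieldType) (V : finType) (d : V -> V -> R).
Variables (eta : nat) (tau r0 : R) (m : nat).
Variables (S : nat -> {set {set V}}) (ldr : nat -> {set V} -> V).
Hypotheses (hm : is_metric d) (heta : (2 <= eta)%N)
  (htau : 1 + (2 ^+ eta.-1 - 1)^-1 <= tau) (hr0 : 0 < r0)
  (hsep0 : forall u v : V, u != v -> r0 < d u v)
  (hS : hier_partition d eta tau r0 m S ldr).

Local Notation radius := (Defs.rad tau r0).

Let d_sym u v : d u v = d v u. Proof. by case: hm. Qed.
Let d_triangle u v w : d u w <= d u v + d v w. Proof. by case: hm. Qed.
Let d_self v : d v v = 0. Proof. by case: hm => _ dE _ _; apply/eqP; rewrite dE. Qed.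

Lemma radius_gt0 j : 0 < radius j.
Proof. by rewrite mulr_gt0 // exprn_gt0 // (tau_gt0 heta htau). Qed.

Lemma radius_le j k : (j <= k)%N -> radius j <= radius k.
Proof. by move=> le_jk; rewrite ler_pM2r // ler_weXn2l // (tau_ge1 heta htau). Qed.

Lemma radius_merge_bound j :
  radius j + 2 * ((2 ^+ eta)^-1 * radius j.+1) <= radius j.+1.
Proof.
have -> : radius j.+1 = tau * radius j by rewrite /Defs.rad exprS mulrA.
move: (radius j) (radius_gt0 j) => r r_gt0.
by rewrite !mulrA -[X in X + _]mul1r -mulrDl ler_pM2r // tau_merge_bound.
Qed.

Definition merged (j : nat) (p : {set V} * V) : {set V} :=
  \bigcup_(X in S j | ldr j X \in p.1) X.

Lemma mem_merged j p x :
  x \in merged j p <-> exists X, [/\ X \in S j, ldr j X \in p.1 & x \in X].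
Proof.
split=> [/bigcupP [X /andP[SX lX] xX]|[X [SX lX xX]]]; first by exists X.
by apply/bigcupP; exists X; rewrite ?SX.
Qed.

Lemma level_succ j : (j < m)%N -> exists ps,
  [/\ greedy_partition d (leaders S ldr j) ((2 ^+ eta)^-1 * radius j.+1) ps,
      forall Y, Y \in S j.+1 <-> exists2 p, p \in ps & Y = merged j p &
      {in ps, forall p, ldr j.+1 (merged j p) = p.2}].
Proof.
case: hS => _ _ step _ lt_jm; have [_ [vs [ps [run [eqS eql]]]]] := step j lt_jm.
exists ps; split=> //.
- rewrite invpow2S_mul2 in run; apply: (greedy_run_partition hm _ run).
  by rewrite mulr_gt0 ?invr_gt0 ?exprn_gt0 ?radius_gt0.
- move=> Y; rewrite eqS inE; split=> [/mapP [p pps ->]|[p pps ->]]; first by exists p.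
  exact: map_f.
Qed.

Lemma subset_succ j : (j < m)%N ->
  {in S j, forall X : {set V}, exists2 Y, Y \in S j.+1 & X \subset Y}.
Proof.
move=> lt_jm X SX; have [ps [gp memS _]] := level_succ lt_jm.
have [p pps lXp] := greedy_cover gp (imset_f (ldr j) SX).
exists (merged j p); first by apply/memS; exists p.
by apply/subsetP=> x xX; apply/mem_merged; exists X.
Qed.

Record level_inv (j : nat) : Prop := LevelInv {
  leader_mem : {in S j, forall X : {set V}, ldr j X \in X};
  level_disjoint : {in S j &, forall (X Y : {set V}) x, x \in X -> x \in Y -> X = Y};
  leader_near : {in S j, forall X : {set V},
                  {in X, forall x, 2 * d x (ldr j X) < radius j}};
  leader_sep : {in S j &, forall X Y : {set V}, X != Y ->
                 (2 ^+ eta)^-1 * radius j <= d (ldr j X) (ldr j Y)} }.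

Lemma level_inv0 : level_inv 0.
Proof.
have [S0 ldr0 _ _] := hS.
have rad0 : radius 0 = r0 by rewrite /Defs.rad expr0 mul1r.
split; rewrite S0 ?rad0.
- by move=> _ /imsetP [v _ ->]; rewrite ldr0 inE.
- by move=> _ _ /imsetP [v _ ->] /imsetP [w _ ->] x /set1P -> /set1P ->.
- by move=> _ /imsetP [v _ ->] x /set1P ->; rewrite ldr0 d_self mulr0.
move=> _ _ /imsetP [v _ ->] /imsetP [w _ ->] neq; rewrite !ldr0.
have /hsep0 /ltW : v != w by apply: contraNneq neq => ->.
apply: le_trans; rewrite ler_pdivrMl ?exprn_gt0 // ler_peMl ?(ltW hr0) //.
by rewrite exprn_ege1 ?ler1n.
Qed.

Lemma level_inv_succ j : (j < m)%N -> level_inv j -> level_inv j.+1.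
Proof.
move=> lt_jm [lead disj near sep]; have [ps [gp memS eql]] := level_succ lt_jm.
have [lead' sub' near' _ disj' sep'] := gp.
have leaderP u : u \in leaders S ldr j -> exists2 X, X \in S j & u = ldr j X.
  by case/imsetP=> X SX ->; exists X.
split.
- move=> _ /memS [p pps ->]; rewrite eql //; apply/mem_merged.
  have [X SX lX] := leaderP _ (subsetP (sub' p pps) _ (lead' p pps)).
  by exists X; split; rewrite -?lX ?lead' // lX lead.
- move=> _ _ /memS [p pps ->] /memS [q qps ->] x.
  case/mem_merged=> [X [SX lXp xX]] /mem_merged [X' [SX' lXq xX']].
  by have eXX' := disj _ _ SX SX' x xX xX'; subst X'; rewrite (disj' p q pps qps _ lXp lXq).
- move=> _ /memS [p pps ->] x /mem_merged [X [SX lXp xX]]; rewrite eql //.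
  apply: le_lt_trans (_ : 2 * (d x (ldr j X) + d (ldr j X) p.2) < _).
    by rewrite ler_pM2l ?d_triangle.
  apply: lt_le_trans (_ : radius j + 2 * ((2 ^+ eta)^-1 * radius j.+1) <= _).
    by rewrite mulrDr ltrD ?near // ltr_pM2l ?near'.
  exact: radius_merge_bound.
- move=> _ _ /memS [p pps ->] /memS [q qps ->] neq; rewrite !eql //.
  by apply: sep' => //; apply: contraNneq neq => ->.
Qed.

Lemma level_invP j : (j <= m)%N -> level_inv j.
Proof.
elim: j => [|j IH] le_jm; first exact: level_inv0.
exact: level_inv_succ le_jm (IH (ltnW le_jm)).
Qed.

Lemma subset_higher j k X : (j <= k <= m)%N -> X \in S j ->
  exists2 Y, Y \in S k & X \subset Y.
Proof.
case/andP; elim: k => [|k IH]; first by rewrite leqn0 => /eqP -> _ SX; exists X.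
rewrite leq_eqVlt => /predU1P [-> _ SX|le_jk lt_km SX]; first by exists X.
have [Y SY XY] := IH le_jk (ltnW lt_km) SX.
have [Z SZ YZ] := subset_succ lt_km SY.
by exists Z; last exact: subset_trans XY YZ.
Qed.

Lemma mem_level_between j k l B : (j <= k <= l)%N -> (l <= m)%N ->
  B \in S j -> B \in S l -> B \in S k.
Proof.
case/andP=> le_jk le_kl le_lm Bj Bl.
have [Y Yk BY] : exists2 Y, Y \in S k & B \subset Y.
  by apply: subset_higher Bj; rewrite le_jk (leq_trans le_kl le_lm).
have [Z Zl YZ] : exists2 Z, Z \in S l & Y \subset Z.
  by apply: subset_higher Yk; rewrite le_kl le_lm.
have lead_B := leader_mem (level_invP (leq_trans le_jk (leq_trans le_kl le_lm))) Bj.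
have eBZ : B = Z.
  apply: (level_disjoint (level_invP le_lm) Bl Zl lead_B).
  exact: subsetP YZ _ (subsetP BY _ lead_B).
suff -> : B = Y by [].
by apply/eqP; rewrite eqEsubset BY eBZ.
Qed.

Lemma responsible_known_near A B j : (j <= m)%N ->
  A \in S j -> B \in S j -> knows d tau r0 j A B ->
  (top_level m S A <= top_level m S B)%N ->
  let a := top_level m S A in
  B \in S a /\ d (ldr a B) (ldr a A) < 2 * radius a.
Proof.
move=> le_jm Aj Bj AkB le_ab a.
have [le_am Aa maxA] := top_levelP le_jm Aj.
have [le_bm Bb _] := top_levelP le_jm Bj.
have le_ja : (j <= a)%N by exact: maxA.
have Ba : B \in S a by apply: mem_level_between le_bm Bj Bb; rewrite le_ja.
have [_ _ near _] := level_invP le_am.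
case/existsP: AkB => x /andP[xA /existsP [y /andP[yB dxy]]].
have dyx : d y x < radius a by rewrite d_sym; apply: lt_le_trans dxy (radius_le le_ja).
have tri : d (ldr a B) (ldr a A) <= d y (ldr a B) + d y x + d x (ldr a A).
  apply: le_trans (d_triangle _ y _) _; rewrite (d_sym _ y) -addrA lerD2l.
  exact: d_triangle.
have := near B Ba y yB; have := near A Aa x xA; split=> //; lra.
Qed.

Lemma card_level_near_le lam a (v : V) (C : {set {set V}}) :
  doubling d lam -> (a <= m)%N ->
  {in C, forall B, B \in S a /\ d (ldr a B) v < 2 * radius a} ->
  (#|C| <= lam ^ eta.+2)%N.
Proof.
move=> hd le_am CP; have [lead disj _ sep] := level_invP le_am.
have inj : {in C &, injective (ldr a)}.
  move=> B1 B2 /CP[SB1 _] /CP[SB2 _] eq_l.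
  apply: (disj _ _ SB1 SB2 (ldr a B1)); first exact: lead.
  by rewrite eq_l lead.
rewrite -(card_in_imset inj).
pose s := (2 ^+ eta.+1)^-1 * radius a.
have s_gt0 : 0 < s by rewrite mulr_gt0 ?invr_gt0 ?exprn_gt0 ?radius_gt0.
apply: (packing_card hm hd (v := v) s_gt0).
  move=> _ /imsetP [B CB ->]; rewrite /s exprS -mulrA mulVKf ?expf_neq0 ?pnatr_eq0 //.
  exact: (CP B CB).2.
move=> _ _ /imsetP [B1 CB1 ->] /imsetP [B2 CB2 ->] neq.
rewrite /s mulrCA invpow2S_mul2; apply: sep; [exact: (CP _ CB1).1 | exact: (CP _ CB2).1 |].
by apply: contraNneq neq => ->.
Qed.

End Hierarchy.

Theorem lemma7 (R : realFieldType) (V : finType) (d : V -> V -> R)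
  (lam eta : nat) (tau r0 : R) (m : nat)
  (S : nat -> {set {set V}}) (ldr : nat -> {set V} -> V) :
  is_metric d ->
  (2 <= #|V|)%N ->
  doubling d lam ->
  (2 <= eta)%N ->
  1 + (2 ^+ eta.-1 - 1)^-1 <= tau -> tau <= 2 ^+ eta ->
  0 < r0 -> (forall u v : V, u != v -> r0 < d u v) ->
  hier_partition d eta tau r0 m S ldr ->
  forall (A : {set V}) (j0 : nat), (j0 <= m)%N -> A \in S j0 ->
  (#|[set B : {set V} | (B != A) &&
        [exists j : 'I_m.+1, [&& A \in S j, B \in S j & knows d tau r0 j A B]] &&
        (top_level m S A <= top_level m S B)%N]| <= lam ^ (3 + eta))%N.
Proof.
move=> hm _ hd heta htau _ hr0 hsep0 hS A j0 le_j0m Aj0.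
have [le_am _ _] := top_levelP le_j0m Aj0.
apply: leq_trans
  (card_level_near_le hm heta htau hr0 hsep0 hS (v := ldr _ A) hd le_am _) _.
  move=> B; rewrite inE => /andP[/andP[_ /existsP [j /and3P[Aj Bj AkB]]] le_ab].
  exact: (responsible_known_near hm heta htau hr0 hsep0 hS (ltn_ord j) Aj Bj AkB le_ab).
by case: lam hd => [|l] _; rewrite ?exp0n // leq_pexp2l // addnC addn3.
Qed.
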